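(* Let $\mathcal H$ be a complex Hilbert space of finite dimension $d$, let $A,B$ be Hermitian operators on $\mathcal H$, let $|\psi\rangle,|\phi\rangle$ be unit vectors, and let $\{|\phi\rangle,|\phi^\perp_1\rangle,\dots,|\phi^\perp_{d-1}\rangle\}$ be an orthonormal basis of $\mathcal H$. Assume $a:=\langle\Delta A\rangle^{\phi}_{\psi}\neq0$ and $b:=\langle\Delta B\rangle^{\phi}_{\psi}\neq 0$. For each choice of sign, set $$S_{\pm}=\sum_{k=1}^{d-1}\Big|\langle\psi|\big(\tfrac{A}{a}\pm i\tfrac{B}{b}\big)|\phi^\perp_k\rangle\Big|^2 .$$ Then, for each choice of sign, $$a\,b\,\Big(1-\tfrac12 S_{\pm}\Big)=\mp\Big(\tfrac{1}{2i}\langle\psi|[A,B]|\psi\rangle-\operatorname{Im}W_{AB}\Big),$$ so that, whenever $1-\tfrac12S_\pm\neq0$, $$\langle\Delta A\rangle^{\phi}_{\psi}\langle\Delta B\rangle^{\phi}_{\psi}=\frac{\mp\big(\frac{1}{2i}\langle\psi|[A,B]|\psi\rangle-\operatorname{Im}W_{AB}\big)}{1-\frac12 S_{\pm}},$$ where $W_{AB}=\langle\psi|A|\phi\rangle\langle\phi|B|\psi\rangle$.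
   Context: PPS standard deviation: for a Hermitian operator $A$ and unit vectors $|\psi\rangle,|\phi\rangle$, $\langle\Delta A\rangle^{\phi}_{\psi}:=\sqrt{\langle\psi|A^2|\psi\rangle-|\langle\phi|A|\psi\rangle|^2}$. $[A,B]=AB-BA$. *)

(* Scalars: an arbitrary numClosedFieldType C (e.g. algC, or
   complex R); the Hilbert space of dimension d is 'cV[C]_d with the standard
   inner product. *)
From HB Require Import structures.
From mathcomp Require Import all_boot all_order all_algebra.
Set Implicit Arguments. Unset Strict Implicit. Unset Printing Implicit Defensive.
Import Order.TTheory GRing.Theory Num.Theory.
Local Open Scope ring_scope.

Section Defs.
Variable C : numClosedFieldType.
Variable d : nat.

Definition ip (u v : 'cV[C]_d) : C := \sum_(i < d) (u i 0)^* * v i 0.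

Definition adj (M : 'M[C]_d) : 'M[C]_d := map_mx Num.conj (M^T).

Definition herm_op (M : 'M[C]_d) : Prop := adj M = M.

Definition unit_vec (u : 'cV[C]_d) : Prop := ip u u = 1.

Definition braket (u : 'cV[C]_d) (M : 'M[C]_d) (v : 'cV[C]_d) : C := ip u (M *m v).

Definition onb_with (phi : 'cV[C]_d) (perp : 'I_d.-1 -> 'cV[C]_d) : Prop :=
  [/\ ip phi phi = 1,
      (forall k, ip phi (perp k) = 0),
      (forall j k, ip (perp j) (perp k) = (j == k)%:R) &
      (forall v : 'cV[C]_d, v = ip phi v *: phi + \sum_(k < d.-1) ip (perp k) v *: perp k)].

Definition pps_sd (A : 'M[C]_d) (psi phi : 'cV[C]_d) : C :=
  sqrtC (braket psi (A *m A) psi - `|braket phi A psi| ^+ 2).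

Definition commut (A B : 'M[C]_d) : 'M[C]_d := A *m B - B *m A.

Definition W (A B : 'M[C]_d) (psi phi : 'cV[C]_d) : C :=
  braket psi A phi * braket phi B psi.

(* S_sigma with sigma = +1 (upper sign) or -1 (lower sign) *)
Definition S_sum (A B : 'M[C]_d) (psi phi : 'cV[C]_d) (perp : 'I_d.-1 -> 'cV[C]_d)
  (sigma : C) : C :=
  let a := pps_sd A psi phi in let b := pps_sd B psi phi in
  \sum_(k < d.-1)
    `|braket psi (a^-1 *: A + (sigma * 'i) *: (b^-1 *: B)) (perp k)| ^+ 2.
End Defs.

(* Expand <psi|[A,B]|psi> = <A psi|B psi> - <B psi|A psi> in the basis
   {phi, perp_k} with coordinates x_k = <perp_k|A psi>, y_k = <perp_k|B psi>:
   the phi-component is W - W^* = 2i Im W, and what remains is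
   D = sum_k (x_k^* y_k - y_k^* x_k).  On the other side, Parseval gives
   a^2 = sum_k |x_k|^2 and b^2 = sum_k |y_k|^2, so expanding the squares in
   S_(+-) yields S_(+-) = 2 -+ i D / (a b).  Both sides of the identity are
   therefore +- i D / 2. *)
From HB Require Import structures.
From mathcomp Require Import all_boot all_order all_algebra.
From mathcomp Require Import ring.
Set Implicit Arguments. Unset Strict Implicit. Unset Printing Implicit Defensive.
Import Order.TTheory GRing.Theory Num.Theory.
Local Open Scope ring_scope.

Lemma normC_add_iscale (C : numClosedFieldType) (s t x y : C) :
  s^* = s -> t^* = t ->
  `|s * x + 'i * t * y| ^+ 2 =
  s ^+ 2 * `|x| ^+ 2 + t ^+ 2 * `|y| ^+ 2 + 'i * s * t * (y * x^* - x * y^*).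
Proof.
move=> sR tR; have ii : 'i * 'i = -1 :> C by rewrite -expr2 sqrCi.
by rewrite !normCK !(rmorphD, rmorphM) /= conjCi sR tR; ring: ii.
Qed.

Lemma mul2i_Im (C : numClosedFieldType) (z : C) : 2 * 'i * 'Im z = z - z^*.
Proof.
have ii : 'i * 'i = -1 :> C by rewrite -expr2 sqrCi.
by rewrite ImE; field: ii.
Qed.

Section InnerProduct.
Variables (C : numClosedFieldType) (d : nat).
Implicit Types (u v w : 'cV[C]_d) (M : 'M[C]_d).

Lemma ipDr u v w : ip u (v + w) = ip u v + ip u w.
Proof. by rewrite /ip -big_split; apply: eq_bigr => i _; rewrite mxE mulrDr. Qed.

Lemma ipBr u v w : ip u (v - w) = ip u v - ip u w.
Proof. by rewrite /ip -sumrB; apply: eq_bigr => i _; rewrite !mxE mulrBr. Qed.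

Lemma ipZr u c v : ip u (c *: v) = c * ip u v.
Proof. by rewrite /ip mulr_sumr; apply: eq_bigr => i _; rewrite mxE mulrCA. Qed.

Lemma ip_sumr n u (f : 'I_n -> 'cV[C]_d) :
  ip u (\sum_(k < n) f k) = \sum_(k < n) ip u (f k).
Proof.
rewrite /ip exchange_big /=; apply: eq_bigr => i _.
by rewrite summxE mulr_sumr.
Qed.

Lemma conj_ip u v : (ip u v)^* = ip v u.
Proof.
rewrite /ip rmorph_sum; apply: eq_bigr => i _.
by rewrite rmorphM /= conjCK mulrC.
Qed.

Lemma ip_adj M u v : ip u (M *m v) = ip (adj M *m u) v.
Proof.
rewrite /ip /adj.
under eq_bigr => i _ do rewrite mxE mulr_sumr.
rewrite exchange_big /=; apply: eq_bigr => j _.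
rewrite mxE rmorph_sum mulr_suml; apply: eq_bigr => i _.
by rewrite !mxE rmorphM /= conjCK mulrCA mulrA.
Qed.

Lemma ip_herm M u v : herm_op M -> ip u (M *m v) = ip (M *m u) v.
Proof. by move=> hM; rewrite ip_adj hM. Qed.

End InnerProduct.

Section Basis.
Variables (C : numClosedFieldType) (d : nat).
Variables (phi : 'cV[C]_d) (perp : 'I_d.-1 -> 'cV[C]_d).
Hypothesis onb : onb_with phi perp.
Implicit Types (u v psi : 'cV[C]_d) (M : 'M[C]_d).

Lemma ip_parseval u v :
  ip u v = (ip phi u)^* * ip phi v + \sum_(k < d.-1) (ip (perp k) u)^* * ip (perp k) v.
Proof.
case: onb => _ _ _ expand.
rewrite {1}(expand v) ipDr ipZr ip_sumr -(conj_ip phi u) mulrC; congr (_ + _).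
by apply: eq_bigr => k _; rewrite ipZr -(conj_ip (perp k) u) mulrC.
Qed.

Lemma pps_sd_perp M psi : herm_op M ->
  pps_sd M psi phi = sqrtC (\sum_(k < d.-1) `|ip (perp k) (M *m psi)| ^+ 2).
Proof.
move=> hM; rewrite /pps_sd /braket -mulmxA (ip_herm _ _ hM) ip_parseval.
rewrite -normCKC; under [X in _ + X - _]eq_bigr do rewrite -normCKC.
by rewrite addrAC subrr add0r.
Qed.

Lemma pps_sd_ge0 M psi : herm_op M -> 0 <= pps_sd M psi phi.
Proof.
by move=> hM; rewrite pps_sd_perp // sqrtC_ge0 sumr_ge0 // => k _; rewrite exprn_ge0.
Qed.

Lemma pps_sd_real M psi : herm_op M -> (pps_sd M psi phi)^* = pps_sd M psi phi.
Proof. by move=> hM; rewrite conj_Creal // ger0_real ?pps_sd_ge0. Qed.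

Lemma pps_sd_sqr M psi : herm_op M ->
  pps_sd M psi phi ^+ 2 = \sum_(k < d.-1) `|ip (perp k) (M *m psi)| ^+ 2.
Proof. by move=> hM; rewrite pps_sd_perp // sqrtCK. Qed.

Section Observables.
Variables (A B : 'M[C]_d) (psi : 'cV[C]_d).
Hypotheses (hA : herm_op A) (hB : herm_op B).

Let x k := ip (perp k) (A *m psi).
Let y k := ip (perp k) (B *m psi).

Lemma braket_commut_perp :
  braket psi (commut A B) psi =
  2 * 'i * 'Im (W A B psi phi) + \sum_(k < d.-1) ((x k)^* * y k - (y k)^* * x k).
Proof.
have Wdef : W A B psi phi = (ip phi (A *m psi))^* * ip phi (B *m psi).
  by rewrite /W /braket (ip_herm psi _ hA) conj_ip.
rewrite /braket /commut mulmxBl ipBr -!mulmxA (ip_herm psi _ hA) (ip_herm psi _ hB).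
rewrite (ip_parseval (A *m psi)) (ip_parseval (B *m psi)) mul2i_Im Wdef.
by rewrite rmorphM /= conjCK (mulrC (ip phi _)) sumrB opprD addrACA.
Qed.

Lemma norm_braket_perp s t k : s^* = s -> t^* = t ->
  `|braket psi (s *: A + 'i *: (t *: B)) (perp k)| ^+ 2 =
  s ^+ 2 * `|x k| ^+ 2 + t ^+ 2 * `|y k| ^+ 2 - 'i * s * t * ((x k)^* * y k - (y k)^* * x k).
Proof.
move=> sR tR.
rewrite /braket mulmxDl -!scalemxAl ipDr !ipZr (ip_herm psi (perp k) hA) (ip_herm psi (perp k) hB).
rewrite -!(conj_ip _ (_ *m psi)) -/(x k) -/(y k) mulrA normC_add_iscale // !conjCK.
by rewrite !norm_conjC; ring.
Qed.

Lemma S_sum_perp sigma : sigma^* = sigma -> sigma ^+ 2 = 1 ->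
  pps_sd A psi phi != 0 -> pps_sd B psi phi != 0 ->
  S_sum A B psi phi perp sigma = 2 - sigma * 'i / (pps_sd A psi phi * pps_sd B psi phi)
    * \sum_(k < d.-1) ((x k)^* * y k - (y k)^* * x k).
Proof.
move=> sR s2; rewrite /S_sum.
have [aR bR] := (pps_sd_real psi hA, pps_sd_real psi hB).
set a := pps_sd A psi phi; set b := pps_sd B psi phi => a0 b0.
have aiR : (a^-1)^* = a^-1 by rewrite fmorphV /= aR.
have sbR : (sigma / b)^* = sigma / b by rewrite rmorphM fmorphV /= sR bR.
under eq_bigr => k _.
  rewrite (mulrC sigma) -scalerA (scalerA sigma) norm_braket_perp //.
over.
rewrite sumrB big_split /= -!mulr_sumr.
rewrite -(pps_sd_sqr psi hA) -(pps_sd_sqr psi hB) -/a -/b.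
by field: s2; rewrite a0 b0.
Qed.

End Observables.
End Basis.

Theorem theorem2 (C : numClosedFieldType) (d : nat) (A B : 'M[C]_d)
  (psi phi : 'cV[C]_d) (perp : 'I_d.-1 -> 'cV[C]_d) (sigma : C) :
  herm_op A -> herm_op B ->
  unit_vec psi -> unit_vec phi ->
  onb_with phi perp ->
  pps_sd A psi phi != 0 -> pps_sd B psi phi != 0 ->
  sigma = 1 \/ sigma = -1 ->
  let a := pps_sd A psi phi in
  let b := pps_sd B psi phi in
  let S := S_sum A B psi phi perp sigma in
  let R := (2 * 'i)^-1 * braket psi (commut A B) psi - 'Im (W A B psi phi) in
  a * b * (1 - 2^-1 * S) = - sigma * R /\
  (1 - 2^-1 * S != 0 -> a * b = (- sigma * R) / (1 - 2^-1 * S)).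
Proof.
move=> hA hB _ _ onb a0 b0 sigma_sign a b S R.
have sR : sigma^* = sigma by case: sigma_sign => ->; rewrite ?rmorphN rmorph1.
have s2 : sigma ^+ 2 = 1 by case: sigma_sign => ->; rewrite ?sqrrN expr1n.
have ii : 'i * 'i = -1 :> C by rewrite -expr2 sqrCi.
have i0 : 'i != 0 :> C by rewrite -normr_eq0 normCi oner_eq0.
have identity : a * b * (1 - 2^-1 * S) = - sigma * R.
  rewrite /R /S (S_sum_perp onb hA hB sR s2 a0 b0) (braket_commut_perp onb psi hA hB) -/a -/b.
  by field: ii; rewrite i0 a0 b0.
by split=> // S_neq0; rewrite -identity mulfK.
Qed.
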